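(* Let $K>0$, $\mu>0$, $h>0$, and $r=h/H\in(0,1)$. Consider the homogeneous controlled patch problem (context) and suppose that, for some $k>0$, $T(x,t)=e^{-Kk^2t}\phi(x)$ is a solution with $\phi\not\equiv 0$ odd of the form $$\phi(x)=\begin{cases}A\sin kx, & |x|<h/4,\\ \pm C+D\sin[k(x\mp\tfrac h2)]\pm E\cos[k(x\mp \tfrac h2)], & h/4\le \pm x\le 3h/4,\\ B\sin[k(x\mp h)], & 3h/4\le \pm x\le h,\end{cases}$$ with $\phi,\phi'$ continuous and $2h$-periodic. Then $$\sin\frac{kh}{2}\left[\frac{2}{kh}\sin\frac{kh}{2}+\Big(\frac{k^2h^2}{\mu}-1\Big)\cos\frac{kh}{2}\right]=0 .$$
   Context: Homogeneous controlled patch problem (governing perturbations about an equilibrium). A field $T(x,t)$, $2h$-periodic in $x$, satisfies $T_t=KT_{xx}+\frac{K\mu}{h^2}g(x,T)$, where $g$ is piecewise constant: on the right action region $h/4<x<3h/4$, $g=T_{\mathrm{int}}-\frac2h\int_{h/4}^{3h/4}T\,dx$; on the left action region $-3h/4<x<-h/4$, $g=T_{\mathrm{int}}-\frac2h\int_{-3h/4}^{-h/4}T\,dx$; and $g=0$ on the core $|x|<h/4$ and buffer $3h/4<|x|\le h$. Here $T_c=\frac2h\int_{-h/4}^{h/4}T\,dx$ is the core average and, with $r=h/H$, $$T_{\mathrm{int}}=T_c\,\frac{1-13r^2/48}{1-r^2/48}$$ (this is the action-region average of the parabolic interpolant through zero boundary values at $x=\pm H$ with core average $T_c$). Solutions are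 understood piecewise, with $T,T_x$ continuous across region boundaries. *)

From Stdlib Require Import Reals Lra.
Open Scope R_scope.

Definition integral_is (f : R -> R) (a b v : R) : Prop :=
  exists pr : Riemann_integrable f a b, RiemannInt pr = v.

Definition second_deriv_is (f : R -> R) (x v : R) : Prop :=
  exists f' : R -> R,
    (exists delta, 0 < delta /\
       forall y, Rabs (y - x) < delta -> derivable_pt_lim f y (f' y)) /\
    derivable_pt_lim f' x v.

Definition pde_at (K mu h : R) (T : R -> R -> R) (x t g : R) : Prop :=
  exists Tt Txx,
    derivable_pt_lim (fun s => T x s) t Tt /\
    second_deriv_is (fun y => T y t) x Txx /\
    Tt = K * Txx + K * mu / h ^ 2 * g.

(* T (2h-periodic in x) solves the homogeneous controlled patch problem,
   with r = h/H.  Ic, IL, IR are the integrals of T(.,t) over the core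
   and the left/right action regions. *)
Definition solves_patch (K mu h H : R) (T : R -> R -> R) : Prop :=
  (forall x t, T (x + 2 * h) t = T x t) /\
  forall t, exists Ic IL IR : R,
    integral_is (fun y => T y t) (- h / 4) (h / 4) Ic /\
    integral_is (fun y => T y t) (- (3 * h / 4)) (- h / 4) IL /\
    integral_is (fun y => T y t) (h / 4) (3 * h / 4) IR /\
    let r := h / H in
    let Tc := 2 / h * Ic in
    let Tint := Tc * ((1 - 13 * r ^ 2 / 48) / (1 - r ^ 2 / 48)) in
    (forall x, Rabs x < h / 4 -> pde_at K mu h T x t 0) /\
    (forall x, h / 4 < x < 3 * h / 4 -> pde_at K mu h T x t (Tint - 2 / h * IR)) /\
    (forall x, - (3 * h / 4) < x < - h / 4 -> pde_at K mu h T x t (Tint - 2 / h * IL)) /\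
    (forall x, 3 * h / 4 < Rabs x <= h -> pde_at K mu h T x t 0).

From Stdlib Require Import Reals Lra.
From Coquelicot Require Import Coquelicot.
Open Scope R_scope.

(* Matching phi and phi' at the junctions x = h/4 and x = 3h/4 gives four linear
   relations among A, ..., E in s = sin (kh/4), c = cos (kh/4).  The core average
   vanishes because phi is odd, so the PDE at the centre x = h/2 of the right action
   region at t = 0 gives a fifth one, C ((kh)^2/mu - 1) (kh/4) = E s.  When s c <> 0
   the junction relations force D = 0, A = -B and C c = -E (c^2 - s^2); with the fifth
   relation either s c + ((kh)^2/mu - 1) (kh/4) (c^2 - s^2) = 0, which is the claim
   after the double-angle formulas, or all coefficients vanish, and then phi vanishes
   on [-h, h], hence everywhere by periodicity. *)

Lemma continuity_pt_eq_near (F : (R -> Prop) -> Prop) {FF : ProperFilter F}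
    (f g : R -> R) (x : R) :
  filter_le F (locally x) -> F (fun y => f y = g y) ->
  continuity_pt f x -> continuity_pt g x -> f x = g x.
Proof.
  intros HF Hfg Hf Hg.
  apply continuity_pt_filterlim in Hf, Hg.
  apply (filterlim_locally_unique (F := F) g).
  - exact (filterlim_ext_loc f g Hfg (filterlim_filter_le_1 f HF Hf)).
  - exact (filterlim_filter_le_1 g HF Hg).
Qed.

Lemma continuity_pt_eq_at_left (f g : R -> R) (a x : R) :
  a < x -> (forall y, a < y < x -> f y = g y) ->
  continuity_pt f x -> continuity_pt g x -> f x = g x.
Proof.
  intros Hax Hfg. apply (continuity_pt_eq_near (at_left x)); [apply filter_le_within|].
  assert (Hd : 0 < x - a) by lra.
  exists (mkposreal _ Hd); intros y Hy Hyx; apply Hfg.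
  apply Rabs_def2 in Hy; cbn in Hy; lra.
Qed.

Lemma continuity_pt_eq_at_right (f g : R -> R) (x b : R) :
  x < b -> (forall y, x < y < b -> f y = g y) ->
  continuity_pt f x -> continuity_pt g x -> f x = g x.
Proof.
  intros Hxb Hfg. apply (continuity_pt_eq_near (at_right x)); [apply filter_le_within|].
  assert (Hd : 0 < b - x) by lra.
  exists (mkposreal _ Hd); intros y Hy Hxy; apply Hfg.
  apply Rabs_def2 in Hy; cbn in Hy; lra.
Qed.

Lemma derivable_pt_lim_unique_local (f g : R -> R) (a b x l l' : R) :
  a < x < b -> (forall y, a < y < b -> f y = g y) ->
  derivable_pt_lim f x l -> derivable_pt_lim g x l' -> l = l'.
Proof.
  intros Hx Hfg Hf Hg. apply (uniqueness_limite g x); [|exact Hg].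
  exact (derivable_pt_lim_locally_ext f g x a b l Hx Hfg Hf).
Qed.

Lemma second_deriv_is_unique_local (f g g' : R -> R) (a b x v v' : R) :
  a < x < b -> (forall y, a < y < b -> f y = g y) ->
  (forall y, derivable_pt_lim g y (g' y)) -> derivable_pt_lim g' x v' ->
  second_deriv_is f x v -> v = v'.
Proof.
  intros Hx Hfg Hg Hg' [f' [[d [Hd Hf']] Hf'']].
  set (a' := Rmax a (x - d)); set (b' := Rmin b (x + d)).
  assert (Ha' : a <= a' /\ x - d <= a') by (split; apply Rmax_l || apply Rmax_r).
  assert (Hb' : b' <= b /\ b' <= x + d) by (split; apply Rmin_l || apply Rmin_r).
  assert (Hx' : a' < x < b').
  { split; [apply Rmax_lub_lt | apply Rmin_glb_lt]; lra. }
  apply (uniqueness_limite g' x); [|exact Hg'].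
  apply (derivable_pt_lim_locally_ext f' g' x a' b' v Hx'); [|exact Hf''].
  intros y Hy. apply (derivable_pt_lim_unique_local f g a b y); [lra| exact Hfg | | apply Hg].
  apply Hf'. apply Rabs_def1; lra.
Qed.

Lemma integral_is_antiderivative (f F dF : R -> R) (a b v : R) :
  a <= b ->
  (forall x, a <= x <= b -> derivable_pt_lim F x (dF x)) ->
  (forall x, a <= x <= b -> continuity_pt dF x) ->
  (forall x, a < x < b -> dF x = f x) ->
  integral_is f a b v -> v = F b - F a.
Proof.
  intros Hab HF HdF Hf [pr Hpr]. rewrite <- Hpr, <- RInt_Reals.
  apply is_RInt_unique, (is_RInt_ext dF).
  - rewrite Rmin_left, Rmax_right by lra. exact Hf.
  - apply (is_RInt_derive (V := R_CompleteNormedModule) F dF);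
      rewrite Rmin_left, Rmax_right by lra; intros x Hx.
    + apply is_derive_Reals, HF, Hx.
    + apply continuity_pt_filterlim, HdF, Hx.
Qed.

Lemma periodic_zero (f : R -> R) (p a : R) :
  0 < p -> (forall x, f (x + p) = f x) ->
  (forall x, a <= x <= a + p -> f x = 0) -> forall x, f x = 0.
Proof.
  intros Hp Hper Hzero.
  assert (Hshift : forall (n : Z) x, f (x + p * IZR n) = f x).
  { induction n as [|n IH|n IH] using Z.peano_ind; intro x.
    - rewrite Rmult_0_r, Rplus_0_r. reflexivity.
    - rewrite succ_IZR, <- (IH x), <- (Hper (x + p * IZR n)). f_equal. ring.
    - rewrite <- (IH x), <- (Hper (x + p * IZR (Z.pred n))), <- Z.sub_1_r, minus_IZR.
      f_equal. simpl. ring. }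
  intro x. set (n := (up ((x - a) / p) - 1)%Z).
  destruct (archimed ((x - a) / p)) as [Hup1 Hup2].
  assert (Hn : (x - a) / p - 1 < IZR n <= (x - a) / p).
  { unfold n. rewrite minus_IZR. simpl. lra. }
  assert (Hq : (x - a) / p * p = x - a) by (field; lra).
  replace x with ((x - p * IZR n) + p * IZR n) by ring.
  rewrite Hshift. apply Hzero. nra.
Qed.

Lemma mode_algebra (s c m A B C D E : R) :
  s ^ 2 + c ^ 2 = 1 ->
  A * s = C - D * s + E * c -> C + D * s + E * c = - B * s ->
  A * c = D * c + E * s -> D * c - E * s = B * c ->
  C * m = E * s ->
  ~ (A = 0 /\ B = 0 /\ C = 0 /\ D = 0 /\ E = 0) ->
  s * c * (s * c + m * (c ^ 2 - s ^ 2)) = 0.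
Proof.
  intros Hsc Hval_in Hval_out Hslope_in Hslope_out Hm Hnz.
  destruct (Req_dec (s * c) 0) as [Hsc0|Hsc0]; [rewrite Hsc0; ring|].
  assert (Hc : c <> 0) by (intro Hc; apply Hsc0; rewrite Hc; ring).
  assert (HsumC : (A + B) * c = 2 * D * c) by lra.
  assert (HsumS : (A + B) * s = - 2 * D * s) by lra.
  assert (HD : D = 0).
  { assert (H4D : 4 * D * (s * c) = 0).
    { replace (4 * D * (s * c)) with ((2 * D * c) * s - (- 2 * D * s) * c) by ring.
      rewrite <- HsumC, <- HsumS. ring. }
    destruct (Rmult_integral _ _ H4D) as [H|H]; [lra|contradiction]. }
  subst D.
  assert (HAB : A + B = 0).
  { replace (A + B) with ((A + B) * (s ^ 2 + c ^ 2)) by (rewrite Hsc; ring).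
    replace ((A + B) * (s ^ 2 + c ^ 2)) with (((A + B) * s) * s + ((A + B) * c) * c) by ring.
    rewrite HsumC, HsumS. ring. }
  assert (HdiffC : (A - B) * c = 2 * E * s) by lra.
  assert (HdiffS : (A - B) * s = 2 * C + 2 * E * c) by lra.
  assert (HCc : C * c = - E * (c ^ 2 - s ^ 2)).
  { apply (Rmult_eq_reg_l 2); [|lra].
    replace (2 * (C * c)) with (((A - B) * s) * c - 2 * E * c * c) by (rewrite HdiffS; ring).
    replace ((A - B) * s * c) with (((A - B) * c) * s) by ring. rewrite HdiffC. ring. }
  assert (HE : E * (s * c + m * (c ^ 2 - s ^ 2)) = 0).
  { replace (E * (s * c + m * (c ^ 2 - s ^ 2)))
      with ((E * s) * c - m * (- E * (c ^ 2 - s ^ 2))) by ring.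
    rewrite <- HCc, <- Hm. ring. }
  destruct (Rmult_integral _ _ HE) as [HE0|Hgoal]; [|rewrite Hgoal; ring].
  exfalso. subst E. apply Hnz.
  assert (HAmB : A - B = 0) by (apply (Rmult_eq_reg_r c); [rewrite HdiffC; ring|exact Hc]).
  rewrite HAmB in HdiffS. repeat split; lra.
Qed.

Section SeparableMode.

Variables (h k A B C D E : R) (phi phi' : R -> R).
Hypothesis h_pos : 0 < h.
Hypothesis k_pos : 0 < k.
Hypothesis phi_core : forall x, Rabs x < h / 4 -> phi x = A * sin (k * x).
Hypothesis phi_action : forall x, h / 4 <= x <= 3 * h / 4 ->
  phi x = C + D * sin (k * (x - h / 2)) + E * cos (k * (x - h / 2)).
Hypothesis phi_buffer : forall x, 3 * h / 4 <= x <= h -> phi x = B * sin (k * (x - h)).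
Hypothesis phi_derive : forall x, derivable_pt_lim phi x (phi' x).
Hypothesis phi'_cont : continuity phi'.

Lemma core_derive x : derivable_pt_lim (fun y => A * sin (k * y)) x (A * k * cos (k * x)).
Proof. apply is_derive_Reals. auto_derive; [exact I | ring]. Qed.

Lemma action_derive x :
  derivable_pt_lim (fun y => C + D * sin (k * (y - h / 2)) + E * cos (k * (y - h / 2))) x
    (k * (D * cos (k * (x - h / 2)) - E * sin (k * (x - h / 2)))).
Proof. apply is_derive_Reals. auto_derive; [exact I | unfold Rminus; ring]. Qed.

Lemma buffer_derive x :
  derivable_pt_lim (fun y => B * sin (k * (y - h))) x (B * k * cos (k * (x - h))).
Proof. apply is_derive_Reals. auto_derive; [exact I | unfold Rminus; ring]. Qed.

Lemma phi'_core x : - (h / 4) < x < h / 4 -> phi' x = A * k * cos (k * x).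
Proof.
  intro Hx.
  apply (derivable_pt_lim_unique_local phi (fun y => A * sin (k * y)) (- (h / 4)) (h / 4) x);
    [exact Hx | | apply phi_derive | apply core_derive].
  intros y Hy. apply phi_core, Rabs_def1; lra.
Qed.

Lemma phi'_action x : h / 4 < x < 3 * h / 4 ->
  phi' x = k * (D * cos (k * (x - h / 2)) - E * sin (k * (x - h / 2))).
Proof.
  intro Hx.
  apply (derivable_pt_lim_unique_local phi
      (fun y => C + D * sin (k * (y - h / 2)) + E * cos (k * (y - h / 2)))
      (h / 4) (3 * h / 4) x);
    [exact Hx | | apply phi_derive | apply action_derive].
  intros y Hy. apply phi_action; lra.
Qed.

Lemma phi'_buffer x : 3 * h / 4 < x < h -> phi' x = B * k * cos (k * (x - h)).
Proof.
  intro Hx.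
  apply (derivable_pt_lim_unique_local phi (fun y => B * sin (k * (y - h))) (3 * h / 4) h x);
    [exact Hx | | apply phi_derive | apply buffer_derive].
  intros y Hy. apply phi_buffer; lra.
Qed.

Lemma phi_continuous x : continuity_pt phi x.
Proof. exact (derivable_continuous_pt _ _ (exist _ _ (phi_derive x))). Qed.

Lemma junction_value_inner :
  A * sin (k * h / 4) = C - D * sin (k * h / 4) + E * cos (k * h / 4).
Proof.
  assert (Hphi : phi (h / 4) = A * sin (k * (h / 4))).
  { apply (continuity_pt_eq_at_left phi (fun y => A * sin (k * y)) (- (h / 4))); [lra | | | reg].
    - intros y Hy. apply phi_core, Rabs_def1; lra.
    - apply phi_continuous. }
  rewrite phi_action in Hphi by lra.
  replace (k * (h / 4 - h / 2)) with (- (k * h / 4)) in Hphi by field.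
  rewrite sin_neg, cos_neg in Hphi.
  replace (k * (h / 4)) with (k * h / 4) in Hphi by field. lra.
Qed.

Lemma junction_value_outer :
  C + D * sin (k * h / 4) + E * cos (k * h / 4) = - B * sin (k * h / 4).
Proof.
  assert (Hphi := phi_buffer (3 * h / 4)).
  rewrite phi_action in Hphi by lra.
  replace (k * (3 * h / 4 - h / 2)) with (k * h / 4) in Hphi by field.
  replace (k * (3 * h / 4 - h)) with (- (k * h / 4)) in Hphi by field.
  rewrite sin_neg in Hphi.
  lra.
Qed.

Lemma junction_slope_inner :
  A * cos (k * h / 4) = D * cos (k * h / 4) + E * sin (k * h / 4).
Proof.
  assert (Hleft : phi' (h / 4) = A * k * cos (k * (h / 4))).
  { apply (continuity_pt_eq_at_left phi' (fun y => A * k * cos (k * y)) (- (h / 4)));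
      [lra | | apply phi'_cont | reg].
    intros y Hy. apply phi'_core. lra. }
  assert (Hright : phi' (h / 4) =
      k * (D * cos (k * (h / 4 - h / 2)) - E * sin (k * (h / 4 - h / 2)))).
  { apply (continuity_pt_eq_at_right phi'
      (fun y => k * (D * cos (k * (y - h / 2)) - E * sin (k * (y - h / 2)))) (h / 4) (3 * h / 4));
      [lra | | apply phi'_cont | reg].
    intros y Hy. apply phi'_action. lra. }
  replace (k * (h / 4 - h / 2)) with (- (k * h / 4)) in Hright by field.
  rewrite sin_neg, cos_neg in Hright.
  replace (k * (h / 4)) with (k * h / 4) in Hleft by field.
  apply (Rmult_eq_reg_l k); [nra | lra].
Qed.

Lemma junction_slope_outer :
  D * cos (k * h / 4) - E * sin (k * h / 4) = B * cos (k * h / 4).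
Proof.
  assert (Hleft : phi' (3 * h / 4) =
      k * (D * cos (k * (3 * h / 4 - h / 2)) - E * sin (k * (3 * h / 4 - h / 2)))).
  { apply (continuity_pt_eq_at_left phi'
      (fun y => k * (D * cos (k * (y - h / 2)) - E * sin (k * (y - h / 2)))) (h / 4) (3 * h / 4));
      [lra | | apply phi'_cont | reg].
    intros y Hy. apply phi'_action. lra. }
  assert (Hright : phi' (3 * h / 4) = B * k * cos (k * (3 * h / 4 - h))).
  { apply (continuity_pt_eq_at_right phi' (fun y => B * k * cos (k * (y - h))) (3 * h / 4) h);
      [lra | | apply phi'_cont | reg].
    intros y Hy. apply phi'_buffer. lra. }
  replace (k * (3 * h / 4 - h / 2)) with (k * h / 4) in Hleft by field.
  replace (k * (3 * h / 4 - h)) with (- (k * h / 4)) in Hright by field.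
  rewrite cos_neg in Hright.
  apply (Rmult_eq_reg_l k); [nra | lra].
Qed.

Lemma core_integral (f : R -> R) (v : R) :
  (forall y, - h / 4 < y < h / 4 -> f y = phi y) ->
  integral_is f (- h / 4) (h / 4) v -> v = 0.
Proof.
  intros Hf HI.
  rewrite (integral_is_antiderivative f (fun y => - (A / k) * cos (k * y))
             (fun y => A * sin (k * y)) (- h / 4) (h / 4) v); [| lra | | | | exact HI].
  - replace (k * (- h / 4)) with (- (k * (h / 4))) by field. rewrite cos_neg. ring.
  - intros x _. apply is_derive_Reals. auto_derive; [exact I | field; lra].
  - intros x _. reg.
  - intros x Hx. rewrite Hf by exact Hx. symmetry. apply phi_core, Rabs_def1; lra.
Qed.

Lemma action_integral (f : R -> R) (v : R) :
  (forall y, h / 4 < y < 3 * h / 4 -> f y = phi y) ->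
  integral_is f (h / 4) (3 * h / 4) v -> v = C * (h / 2) + 2 * E / k * sin (k * h / 4).
Proof.
  intros Hf HI.
  rewrite (integral_is_antiderivative f
             (fun y => C * y - D / k * cos (k * (y - h / 2)) + E / k * sin (k * (y - h / 2)))
             (fun y => C + D * sin (k * (y - h / 2)) + E * cos (k * (y - h / 2)))
             (h / 4) (3 * h / 4) v); [| lra | | | | exact HI].
  - replace (k * (3 * h / 4 - h / 2)) with (k * h / 4) by field.
    replace (k * (h / 4 - h / 2)) with (- (k * h / 4)) by field.
    rewrite sin_neg, cos_neg. field. lra.
  - intros x _. apply is_derive_Reals. auto_derive; [exact I | unfold Rminus; field; lra].
  - intros x _. reg.
  - intros x Hx. rewrite Hf by exact Hx. symmetry. apply phi_action; lra.
Qed.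

Lemma phi_zero_on_half_period :
  A = 0 -> B = 0 -> C = 0 -> D = 0 -> E = 0 -> forall x, 0 <= x <= h -> phi x = 0.
Proof.
  intros HA HB HC HD HE x Hx. subst A B C D E.
  destruct (Rlt_le_dec x (h / 4)) as [H1|H1].
  - rewrite phi_core by (apply Rabs_def1; lra). ring.
  - destruct (Rle_lt_dec x (3 * h / 4)) as [H2|H2].
    + rewrite phi_action by lra. ring.
    + rewrite phi_buffer by lra. ring.
Qed.

Variables (K mu H : R).
Hypothesis mu_pos : 0 < mu.

Lemma patch_balance :
  solves_patch K mu h H (fun x t => exp (- K * k ^ 2 * t) * phi x) -> 0 < K ->
  C * ((k ^ 2 * h ^ 2 / mu - 1) * (k * h / 4)) = E * sin (k * h / 4).
Proof.
  intros [_ Hsol] HK.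
  destruct (Hsol 0) as [Ic [IL [IR [HIc [_ [HIR Hpde]]]]]]; cbv zeta in Hpde.
  destruct Hpde as [_ [Hpde _]].
  assert (Hinit : forall y, exp (- K * k ^ 2 * 0) * phi y = phi y).
  { intro y. rewrite Rmult_0_r, exp_0. ring. }
  assert (HIc0 : Ic = 0) by (refine (core_integral _ _ _ HIc); intros y _; apply Hinit).
  assert (HIRv : IR = C * (h / 2) + 2 * E / k * sin (k * h / 4))
    by (refine (action_integral _ _ _ HIR); intros y _; apply Hinit).
  destruct (Hpde (h / 2) ltac:(lra)) as [Tt [Txx [HTt [HTxx Heq]]]].
  assert (Hmid : phi (h / 2) = C + E).
  { rewrite phi_action by lra. rewrite Rminus_diag, Rmult_0_r, sin_0, cos_0. ring. }
  assert (HTt0 : Tt = - K * k ^ 2 * (C + E)).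
  { apply (uniqueness_limite (fun t => exp (- K * k ^ 2 * t) * phi (h / 2)) 0 _ _ HTt).
    rewrite <- Hmid. apply is_derive_Reals. auto_derive; [exact I|].
    rewrite Rmult_0_r, exp_0. ring. }
  assert (HTxx0 : Txx = - E * k ^ 2).
  { refine (second_deriv_is_unique_local _
      (fun y => C + D * sin (k * (y - h / 2)) + E * cos (k * (y - h / 2)))
      (fun y => k * (D * cos (k * (y - h / 2)) - E * sin (k * (y - h / 2))))
      (h / 4) (3 * h / 4) (h / 2) _ _ _ _ action_derive _ HTxx).
    - lra.
    - intros y Hy. rewrite Hinit. apply phi_action. lra.
    - apply is_derive_Reals. auto_derive; [exact I|].
      rewrite Rplus_opp_r, Rmult_0_r, sin_0, cos_0. ring. }
  rewrite HIc0, HTt0, HTxx0, HIRv in Heq.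
  (* The core average is 0, so the interpolated temperature T_int drops out. *)
  rewrite Rmult_0_r, Rmult_0_l in Heq.
  assert (Hbal : K * (k ^ 3 * h ^ 3 * C - k * h * mu * C - 4 * mu * E * sin (k * h / 4)) = 0).
  { apply Rminus_diag_eq in Heq.
    lazymatch type of Heq with ?d = 0 =>
      replace (K * (k ^ 3 * h ^ 3 * C - k * h * mu * C - 4 * mu * E * sin (k * h / 4)))
        with (- (k * h ^ 3 * d)) by (field; lra) end.
    rewrite Heq. ring. }
  assert (Hcubic : k ^ 3 * h ^ 3 * C - k * h * mu * C = 4 * mu * E * sin (k * h / 4)).
  { destruct (Rmult_integral _ _ Hbal); lra. }
  replace (C * ((k ^ 2 * h ^ 2 / mu - 1) * (k * h / 4)))
    with ((k ^ 3 * h ^ 3 * C - k * h * mu * C) / (4 * mu)) by (field; lra).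
  rewrite Hcubic. field. lra.
Qed.

Lemma separable_mode_dispersion :
  solves_patch K mu h H (fun x t => exp (- K * k ^ 2 * t) * phi x) -> 0 < K ->
  ~ (A = 0 /\ B = 0 /\ C = 0 /\ D = 0 /\ E = 0) ->
  sin (k * h / 2) *
    (2 / (k * h) * sin (k * h / 2) + (k ^ 2 * h ^ 2 / mu - 1) * cos (k * h / 2)) = 0.
Proof.
  intros Hsol HK Hnz.
  set (a := k * h / 4).
  assert (Hpyth : sin a ^ 2 + cos a ^ 2 = 1) by (rewrite <- (sin2_cos2 a); unfold Rsqr; ring).
  assert (Hmode := mode_algebra (sin a) (cos a) ((k ^ 2 * h ^ 2 / mu - 1) * a) A B C D E Hpyth
    junction_value_inner junction_value_outer junction_slope_inner junction_slope_outer
    (patch_balance Hsol HK) Hnz).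
  assert (Ha : 0 < a) by (unfold a; apply Rdiv_lt_0_compat; nra).
  replace (k * h / 2) with (2 * a) by (unfold a; field).
  rewrite sin_2a, cos_2a.
  replace (2 / (k * h)) with (/ (2 * a)) by (unfold a; field; lra).
  replace (2 * sin a * cos a * (/ (2 * a) * (2 * sin a * cos a)
             + (k ^ 2 * h ^ 2 / mu - 1) * (cos a * cos a - sin a * sin a)))
    with (2 / a * (sin a * cos a * (sin a * cos a
             + (k ^ 2 * h ^ 2 / mu - 1) * a * (cos a ^ 2 - sin a ^ 2))))
    by (field; lra).
  rewrite Hmode. ring.
Qed.

End SeparableMode.

Theorem mainTheorem3 (K mu h H k A B C D E : R) (phi : R -> R) :
  0 < K -> 0 < mu -> 0 < h -> 0 < h / H < 1 -> 0 < k ->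
  (forall x, phi (- x) = - phi x) ->
  (exists x, phi x <> 0) ->
  (forall x, Rabs x < h / 4 -> phi x = A * sin (k * x)) ->
  (forall x, h / 4 <= x <= 3 * h / 4 ->
     phi x = C + D * sin (k * (x - h / 2)) + E * cos (k * (x - h / 2))) ->
  (forall x, h / 4 <= - x <= 3 * h / 4 ->
     phi x = - C + D * sin (k * (x + h / 2)) - E * cos (k * (x + h / 2))) ->
  (forall x, 3 * h / 4 <= x <= h -> phi x = B * sin (k * (x - h))) ->
  (forall x, 3 * h / 4 <= - x <= h -> phi x = B * sin (k * (x + h))) ->
  (exists phi' : R -> R,
     (forall x, derivable_pt_lim phi x (phi' x)) /\ continuity phi') ->
  (forall x, phi (x + 2 * h) = phi x) ->
  solves_patch K mu h H (fun x t => exp (- K * k ^ 2 * t) * phi x) ->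
  sin (k * h / 2) *
    (2 / (k * h) * sin (k * h / 2) + (k ^ 2 * h ^ 2 / mu - 1) * cos (k * h / 2)) = 0.
Proof.
  intros HK Hmu Hh _ Hk Hodd [x0 Hx0] Hcore Haction _ Hbuffer _ [phi' [Hd Hc]] Hper Hsol.
  eapply separable_mode_dispersion; eauto.
  intros (HA & HB & HC & HD & HE). apply Hx0.
  apply (periodic_zero phi (2 * h) (- h)); [lra | exact Hper |].
  assert (Hhalf : forall x, 0 <= x <= h -> phi x = 0)
    by (eapply phi_zero_on_half_period; eauto).
  intros x Hx. destruct (Rle_lt_dec 0 x).
  - apply Hhalf. lra.
  - rewrite <- (Ropp_involutive x), Hodd, Hhalf; [ring | lra].
Qed.
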